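(* Let $D\in\mathbb{D}^n_+$, $W\in\mathbb{R}^{n\times n}$, $u\in\mathbb{R}^n$, $A:=W-D$, and $\mathcal X=\{x\in\mathbb{R}^n: Dx\in[0,1]^n\}$. A point $x^\star\in\mathcal X$ is an equilibrium of the projected dynamical system $\dot x=\Pi_{\mathcal X}(x,Ax+u)$ (i.e. $\Pi_{\mathcal X}(x^\star,Ax^\star+u)=0$) if and only if it is an equilibrium of the linear-threshold network $\dot x=-Dx+[Wx+u]_0^1$ (i.e. $-Dx^\star+[Wx^\star+u]_0^1=0$).
   Context: $\mathbb{D}^n_+$ is the set of positive diagonal matrices; $[z]_0^1=\max(0,\min(z,1))$ elementwise. For $x\in\mathcal X$, $T_{\mathcal X}(x)$ is the tangent cone of $\mathcal X$ at $x$ and $\Pi_{\mathcal X}(x,v)=\arg\min_{y\in T_{\mathcal X}(x)}\|y-v\|^2$. *)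

From HB Require Import structures.
From mathcomp Require Import all_boot all_order all_algebra.
From mathcomp Require Import reals.
Set Implicit Arguments. Unset Strict Implicit. Unset Printing Implicit Defensive.
Import Order.TTheory GRing.Theory Num.Theory.
Local Open Scope ring_scope.

Definition posdiag (R : realType) (n : nat) (D : 'M[R]_n) : Prop :=
  is_diag_mx D /\ forall i : 'I_n, 0 < D i i.

Definition sqnorm (R : realType) (n : nat) (v : 'cV[R]_n) : R :=
  \sum_(i < n) (v i 0) ^+ 2.

Definition Xset (R : realType) (n : nat) (D : 'M[R]_n) (x : 'cV[R]_n) : Prop :=
  forall i : 'I_n, 0 <= (D *m x) i 0 <= 1.

(* Tangent cone of the convex set X at x: the (Euclidean) closure of the cone
   of feasible directions  \bigcup_{t > 0} t (X - x), written out. *)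
Definition tangent_cone (R : realType) (n : nat) (D : 'M[R]_n)
    (x v : 'cV[R]_n) : Prop :=
  forall eps : R, 0 < eps ->
    exists (y : 'cV[R]_n) (t : R),
      Xset D y /\ 0 < t /\ sqnorm (t *: (y - x) - v) < eps.

Definition is_proj (R : realType) (n : nat) (D : 'M[R]_n)
    (x v p : 'cV[R]_n) : Prop :=
  tangent_cone D x p /\
  forall y : 'cV[R]_n, tangent_cone D x y -> sqnorm (p - v) <= sqnorm (y - v).

Definition clamp01 (R : realType) (n : nat) (z : 'cV[R]_n) : 'cV[R]_n :=
  \col_i Num.max 0 (Num.min (z i 0) 1).

From HB Require Import structures.
From mathcomp Require Import all_boot all_order all_algebra.
From mathcomp Require Import reals.
From mathcomp Require Import lra.
Set Implicit Arguments. Unset Strict Implicit. Unset Printing Implicit Defensive.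
Import Order.TTheory GRing.Theory Num.Theory.
Local Open Scope ring_scope.

(* Both conditions are the same complementarity condition. Since D is
   diagonal and positive, X is a box, so its tangent cone at x is a product
   of half-lines and lines, and 0 is the projection of v onto it iff,
   coordinatewise, v_i (b - (Dx)_i) <= 0 for every b in [0,1].  With
   v = (W - D)x + u = z - Dx, z := Wx + u, this is the variational inequality
   characterising (Dx)_i as the projection [z_i]_0^1 of z_i onto [0,1]. *)

Lemma clamp01_eq_iff (R : realType) (z a : R) : 0 <= a <= 1 ->
  Num.max 0 (Num.min z 1) = a <->
  forall b, 0 <= b <= 1 -> (z - a) * (b - a) <= 0.
Proof.
move=> /andP[a_ge0 a_le1]; rewrite minEle maxEle; split.
- by case: ifP; case: ifP => ? ? <- b /andP[? ?]; nra.
- move=> vi.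
  have v0 : (z - a) * (0 - a) <= 0 by apply: vi; rewrite lexx ler01.
  have v1 : (z - a) * (1 - a) <= 0 by apply: vi; rewrite lexx ler01.
  by case: ifP; case: ifP => ? ?; nra.
Qed.

Lemma col_addNr_eq0 (V : zmodType) n (a c : 'cV[V]_n) :
  - a + c = 0 <-> forall i, c i 0 = a i 0.
Proof.
split=> [ac i | ac]; last by apply/matrixP => i j; rewrite ord1 !mxE ac addNr.
have := congr1 (fun M : 'cV[V]_n => M i 0) ac; rewrite !mxE addrC => /eqP.
by rewrite subr_eq0 => /eqP.
Qed.

Section TangentCone.
Variables (R : realType) (n : nat) (D : 'M[R]_n).

Lemma diag_mulmx_coord (x : 'cV[R]_n) i :
  is_diag_mx D -> (D *m x) i 0 = D i i * x i 0.
Proof.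
move=> /is_diag_mxP D_diag; rewrite mxE (bigD1 i) //= big1 ?addr0 // => j ji.
by rewrite D_diag ?mul0r // eq_sym.
Qed.

Lemma sqnormN (v : 'cV[R]_n) : sqnorm (- v) = sqnorm v.
Proof. by apply: eq_bigr => i _; rewrite mxE sqrrN. Qed.

Lemma sqnorm0 : sqnorm (0 : 'cV[R]_n) = 0.
Proof. by rewrite /sqnorm big1 // => i _; rewrite mxE expr0n. Qed.

Lemma sqr_coord_le_sqnorm (v : 'cV[R]_n) i : v i 0 ^+ 2 <= sqnorm v.
Proof. by rewrite /sqnorm (bigD1 i) //= lerDl sumr_ge0 // => j _; rewrite sqr_ge0. Qed.

Lemma sqnorm_sub_coord (v : 'cV[R]_n) i :
  sqnorm (v i 0 *: delta_mx i 0 - v) = sqnorm v - v i 0 ^+ 2.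
Proof.
rewrite /sqnorm (bigD1 i) //= [in RHS](bigD1 i) //= !mxE !eqxx mulr1 subrr.
rewrite expr0n add0r addrAC subrr add0r; apply: eq_bigr => j ji.
by rewrite !mxE (negbTE ji) mulr0 sub0r sqrrN.
Qed.

Lemma tangent_cone_feasible (x y : 'cV[R]_n) t :
  Xset D y -> 0 < t -> tangent_cone D x (t *: (y - x)).
Proof. by move=> Xy t_gt0 eps eps_gt0; exists y, t; rewrite subrr sqnorm0. Qed.

Hypothesis D_posdiag : posdiag D.

(* Moving x along e_i until (Dx)_i reaches b stays in the box X. *)
Lemma tangent_cone_coord (x : 'cV[R]_n) i b c : Xset D x -> 0 <= b <= 1 ->
  0 < c * (b - (D *m x) i 0) -> tangent_cone D x (c *: delta_mx i 0).
Proof.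
case: D_posdiag => D_diag D_pos Xx b01 c_dir; have Dii_gt0 := D_pos i.
set d := (b - (D *m x) i 0) / D i i.
have d_neq0 : d != 0.
  rewrite mulf_neq0 ?invr_eq0 ?(gt_eqF Dii_gt0) //.
  by apply: contraTneq c_dir => ->; rewrite mulr0 ltxx.
have Xy : Xset D (x + d *: delta_mx i 0).
  move=> j; move: (Xx j); rewrite /d !diag_mulmx_coord // !mxE eqxx andbT.
  have [->|ji] := eqVneq j i; last by rewrite mulr0 addr0.
  by rewrite mulr1 mulrDr mulrCA divff ?gt_eqF // mulr1 addrC subrK.
have -> : c *: delta_mx i 0 = (c / d) *: ((x + d *: delta_mx i 0) - x).
  by rewrite [x + _]addrC addrK scalerA divfK.
apply: tangent_cone_feasible => //.
have cd_gt0 : 0 < c * d by rewrite /d mulrA divr_gt0.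
have dVd : d / d = 1 by rewrite divff.
nra.
Qed.

(* A closed half-space condition on a coordinate passes from the feasible
   directions to their closure. *)
Lemma tangent_cone_coord_sign (x w : 'cV[R]_n) i s :
  (forall y, Xset D y -> 0 <= s * (y i 0 - x i 0)) ->
  tangent_cone D x w -> 0 <= s * w i 0.
Proof.
move=> half Tw; rewrite leNgt; apply/negP => sw_lt0.
have wi_sqr_gt0 : 0 < w i 0 ^+ 2 by rewrite expr2; nra.
have [y [t [Xy [t_gt0 close]]]] := Tw _ wi_sqr_gt0.
have := le_lt_trans (sqr_coord_le_sqnorm _ i) close; rewrite !mxE.
have := half _ Xy; set p := y i 0 - x i 0 => sp_ge0.
have stp_ge0 : 0 <= s * (t * p) by nra.
rewrite !expr2; nra.
Qed.

Lemma is_proj0_iff (x v : 'cV[R]_n) : Xset D x ->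
  is_proj D x v 0 <->
  forall i b, 0 <= b <= 1 -> v i 0 * (b - (D *m x) i 0) <= 0.
Proof.
move=> Xx; split.
- move=> [_ proj_min] i b b01; rewrite leNgt; apply/negP => v_dir.
  have vi_sqr_gt0 : 0 < v i 0 ^+ 2.
    rewrite lt_def sqrf_eq0 sqr_ge0 andbT.
    by apply: contraTneq v_dir => ->; rewrite mul0r ltxx.
  have := proj_min _ (tangent_cone_coord Xx b01 v_dir).
  rewrite sub0r sqnormN sqnorm_sub_coord; lra.
- move=> normal; split.
    by have := @tangent_cone_feasible x x 1 Xx ltr01; rewrite subrr scaler0.
  move=> y Ty; rewrite sub0r sqnormN; apply: ler_sum => i _; rewrite !mxE.
  have: 0 <= - v i 0 * y i 0.
    apply: (tangent_cone_coord_sign _ Ty) => z Xz.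
    case: D_posdiag => D_diag D_pos; have Dii_gt0 := D_pos i.
    have := normal i _ (Xz i); rewrite !diag_mulmx_coord // -mulrBr mulrCA.
    by rewrite pmulr_rle0 // mulNr oppr_ge0.
  rewrite !expr2; nra.
Qed.

End TangentCone.

Theorem proposition4 (R : realType) (n : nat) (D W : 'M[R]_n) (u xs : 'cV[R]_n) :
  posdiag D -> Xset D xs ->
  (is_proj D xs ((W - D) *m xs + u) 0
   <-> - (D *m xs) + clamp01 (W *m xs + u) = 0).
Proof.
move=> D_posdiag Xxs; rewrite is_proj0_iff //.
have vE i : ((W - D) *m xs + u) i 0 = (W *m xs + u) i 0 - (D *m xs) i 0.
  by rewrite mulmxBl !mxE addrAC.
rewrite col_addNr_eq0; split=> [normal | clampE] i.
- by rewrite mxE; apply/clamp01_eq_iff => // b; rewrite -vE; apply: normal.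
- move=> b; rewrite vE; have := clampE i; rewrite mxE.
  by move=> /(clamp01_eq_iff _ (Xxs i)); apply.
Qed.
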